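(* Let $\mathscr{R}$ be the class of rook graphs. Then the class of all (finite, simple, undirected) graphs is transducible from $\mathscr{R}$; that is, there is a transduction ${\mathsf T}$ such that every graph belongs to ${\mathsf T}(\mathscr{R})$.
   Context: A rook graph has vertex set $\{1,\ldots,a\}\times\{1,\ldots,b\}$ for some $a,b\in\mathbb{N}$, and two distinct vertices $(i,j),(i',j')$ are adjacent iff $i=i'$ or $j=j'$. Graphs are viewed as relational structures with universe the vertex set and one symmetric irreflexive binary relation $\mathsf{adj}$; a $C$-colored graph additionally has a unary predicate for each color in the finite set $C$ (colors are arbitrary vertex subsets, not necessarily disjoint). A transduction ${\mathsf T}$ consists of a finite set of colors $C$ and a first-order formula $\varphi(x,y)$ over the signature of $C$-colored graphs. For a graph $G$, ${\mathsf T}(G)$ is the set of all graphs obtained by: (1) adding the colors of $C$ to $G$ arbitrarily, yielding $G^+$; (2) forming the graph $\varphi(G^+)$ on vertex set $V(G)$ in which distinct $u,v$ are adjacent iff $G^+\models\varphi(u,v)$ or $G^+\models\varphi(v,u)$; (3) taking an arbitrary induced subgraph of $\varphi(G^+)$. For a class $\mathscr{C}$, ${\mathsf T}(\mathscr{C})=\bigcup_{G\in\mathscr{C}}{\mathsf T}(G)$, and a class $\mathscr{D}$ is transducible from $\mathscr{C}$ if $\mathscr{D}\subseteq{\mathsf T}(\mathscr{C})$ for some transduction ${\mathsf T}$. *)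

From mathcomp Require Import all_boot.
Set Implicit Arguments. Unset Strict Implicit. Unset Printing Implicit Defensive.

Inductive formula (k : nat) : Type :=
| FAdj : nat -> nat -> formula k
| FEq : nat -> nat -> formula k
| FCol : 'I_k -> nat -> formula k
| FNot : formula k -> formula k
| FAnd : formula k -> formula k -> formula k
| FOr : formula k -> formula k -> formula k
| FExists : nat -> formula k -> formula k
| FForall : nat -> formula k -> formula k.

Fixpoint fv (k : nat) (f : formula k) : seq nat :=
  match f with
  | FAdj i j => [:: i; j]
  | FEq i j => [:: i; j]
  | FCol _ i => [:: i]
  | FNot g => fv g
  | FAnd g h => fv g ++ fv h
  | FOr g h => fv g ++ fv h
  | FExists i g => filter (fun j => j != i) (fv g)
  | FForall i g => filter (fun j => j != i) (fv g)
  end.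

Definition binary_formula (k : nat) (f : formula k) : bool :=
  all (fun j => j < 2) (fv f).

Definition upd (V : Type) (env : nat -> V) (i : nat) (v : V) : nat -> V :=
  fun j => if j == i then v else env j.

Fixpoint sat (k : nat) (V : finType) (adj : rel V) (col : 'I_k -> V -> bool)
    (env : nat -> V) (f : formula k) : Prop :=
  match f with
  | FAdj i j => adj (env i) (env j)
  | FEq i j => env i = env j
  | FCol c i => col c (env i)
  | FNot g => ~ sat adj col env g
  | FAnd g h => sat adj col env g /\ sat adj col env h
  | FOr g h => sat adj col env g \/ sat adj col env h
  | FExists i g => exists v : V, sat adj col (upd env i v) g
  | FForall i g => forall v : V, sat adj col (upd env i v) g
  end.

(** G^+ |= phi(u, v) (x := variable 0, y := variable 1). *)
Definition sat2 (k : nat) (V : finType) (adj : rel V) (col : 'I_k -> V -> bool)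
    (f : formula k) (u v : V) : Prop :=
  sat adj col (upd (upd (fun _ => u) 0 u) 1 v) f.

Definition interp_adj (k : nat) (V : finType) (adj : rel V) (col : 'I_k -> V -> bool)
    (f : formula k) (u v : V) : Prop :=
  u <> v /\ (sat2 adj col f u v \/ sat2 adj col f v u).

(** Rook graph on {1..a} x {1..b}, modelled as 'I_a * 'I_b. *)
Definition rook_adj (a b : nat) : rel ('I_a * 'I_b) :=
  fun p q => (p != q) && ((p.1 == q.1) || (p.2 == q.2)).

(** A (finite simple) graph (T, e) belongs (up to isomorphism) to T(G) for the
    transduction (k colors, phi) and the graph G = (V, adj): there is a
    coloring of G and an induced subgraph of phi(G^+) isomorphic to (T, e),
    i.e. an injective map f : T -> V with e u v <-> phi(G^+)-adjacency of f u, f v. *)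
Definition in_transduction (k : nat) (f : formula k)
    (V : finType) (adj : rel V) (T : finType) (e : rel T) : Prop :=
  exists (col : 'I_k -> V -> bool) (g : T -> V),
    injective g /\
    forall u v : T, e u v <-> interp_adj adj col f (g u) (g v).

Definition in_transduction_rooks (k : nat) (f : formula k)
    (T : finType) (e : rel T) : Prop :=
  exists a b : nat, in_transduction f (@rook_adj a b) e.

From mathcomp Require Import all_boot.

Set Implicit Arguments.
Unset Strict Implicit.
Unset Printing Implicit Defensive.

(* Place the vertex [i] of a graph on [n] vertices on the diagonal cell
   [(i, i)] of the [n x n] rook graph.  Two distinct diagonal cells
   [(i, i)] and [(j, j)] have exactly two common neighbours, [(i, j)] and
   [(j, i)]; colouring the cell [(i, j)] iff [ij] is an edge, the graph is
   recovered by the formula "x and y have a coloured common neighbour". *)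

Definition colored_common_neighbor : formula 1 :=
  FExists 2 (FAnd (FCol ord0 2) (FAnd (FAdj 1 0 2) (FAdj 1 2 1))).

Lemma binary_colored_common_neighbor : binary_formula colored_common_neighbor.
Proof. by []. Qed.

Lemma sat2_colored_common_neighbor (V : finType) (adj : rel V)
    (col : 'I_1 -> V -> bool) (u v : V) :
  sat2 adj col colored_common_neighbor u v <->
  exists z, [/\ col ord0 z, adj u z & adj z v].
Proof. by split=> -[z [? [? ?]]]; exists z. Qed.

Lemma rook_diag_common_neighbors (n : nat) (i j : 'I_n) (z : 'I_n * 'I_n) :
  i != j -> rook_adj (i, i) z && rook_adj z (j, j) = (z == (i, j)) || (z == (j, i)).
Proof.
case: z => k l /eqP ne_ij; rewrite /rook_adj /= !xpair_eqE.
by do ![case: eqP => //= ?; subst].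
Qed.

Definition rel_coloring (n : nat) (r : rel 'I_n) : 'I_1 -> 'I_n * 'I_n -> bool :=
  fun _ p => r p.1 p.2.

Lemma sat2_rook_diag (n : nat) (r : rel 'I_n) (i j : 'I_n) : i != j ->
  sat2 (@rook_adj n n) (rel_coloring r) colored_common_neighbor (i, i) (j, j) <->
  r i j || r j i.
Proof.
move=> ne_ij; have common_nbr := rook_diag_common_neighbors _ ne_ij.
split.
- move=> /sat2_colored_common_neighbor [z [r_z adj_iz adj_zj]].
  move: (common_nbr z) r_z; rewrite /rel_coloring adj_iz adj_zj.
  by case/esym/orP=> /eqP-> /= ->; rewrite ?orbT.
- move=> r_ij_ji; apply/sat2_colored_common_neighbor.
  have [z r_z] : exists2 z, rel_coloring r ord0 z & (z == (i, j)) || (z == (j, i)).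
    by case/orP: r_ij_ji; [exists (i, j) | exists (j, i)]; rewrite ?eqxx ?orbT.
  by move: r_z; rewrite -common_nbr => ? /andP[]; exists z.
Qed.

Lemma in_transduction_rook_diag (n : nat) (r : rel 'I_n) :
  irreflexive r -> symmetric r ->
  in_transduction colored_common_neighbor (@rook_adj n n) r.
Proof.
move=> irr_r sym_r; exists (rel_coloring r), (fun i => (i, i)).
split=> [i j [] //|i j]; split.
- move=> r_ij; have ne_ij : i != j by apply: contraTneq r_ij => ->; rewrite irr_r.
  split; first by move=> [/eqP]; rewrite (negbTE ne_ij).
  by left; apply/sat2_rook_diag; rewrite ?r_ij.
- move=> [ne_ii_jj sat_ij_ji].
  have ne_ij : i != j by apply: contra_not_neq ne_ii_jj => ->.
  have ne_ji : j != i by rewrite eq_sym.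
  case: sat_ij_ji => [/(sat2_rook_diag _ ne_ij) | /(sat2_rook_diag _ ne_ji)];
    by rewrite (sym_r j i) orbb.
Qed.

Lemma in_transduction_pullback (k : nat) (phi : formula k) (V : finType) (adj : rel V)
    (T T' : finType) (e : rel T) (e' : rel T') (h : T -> T') :
  injective h -> (forall u v, e u v = e' (h u) (h v)) ->
  in_transduction phi adj e' -> in_transduction phi adj e.
Proof.
move=> inj_h e_h [col [g [inj_g g_e']]]; exists col, (g \o h).
split=> [|u v]; first exact: inj_comp.
by rewrite e_h; apply: g_e'.
Qed.

Theorem lemma2p6 :
  exists (k : nat) (phi : formula k),
    binary_formula phi /\
    forall (T : finType) (e : rel T),
      irreflexive e -> symmetric e -> in_transduction_rooks phi e.
Proof.
exists 1, colored_common_neighbor; split=> [|T e irr_e sym_e].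
  exact: binary_colored_common_neighbor.
pose r : rel 'I_#|T| := fun i j => e (enum_val i) (enum_val j).
exists #|T|, #|T|.
apply: (in_transduction_pullback (e' := r) (h := enum_rank)) (in_transduction_rook_diag _ _).
- exact: enum_rank_inj.
- by move=> u v; rewrite /r !enum_rankK.
- by move=> i; apply: irr_e.
- by move=> i j; apply: sym_e.
Qed.
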